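(* Let $F : L_n \to \Delta K$ be a non-degenerate $2$-filtration, fix a dimension $q$, and fix grades $d,h$ with $(1,1)\le d\le h-(1,1)$. Set $a=d-(1,1)$, $b=d-(1,0)$, $c=d-(0,1)$, $e=h-(1,1)$, $f=h-(1,0)$, $g=h-(0,1)$. If $adeh=1$, then \[abeh\cdot adef=abef,\quad aceh\cdot adef=acef,\quad abeh\cdot adeg=abeg,\quad aceh\cdot adeg=aceg.\]
   Context: $K$ is a finite simplicial complex, coefficients in a field. $L_n=\{0,\dots,n\}^2$ with product order, $\bot=(0,0)$, $\top=(n,n)$. A $2$-filtration is a monotone map $F$ from $L_n$ to subcomplexes of $K$ with $F(\bot)=\emptyset$, $F(\top)=K$. $ZB_qF[x,y]=\dim(Z_qF(x)\cap B_qF(y))$ for $y\ne\top$, and $\dim Z_qF(x)$ for $y=\top$ ($Z_q,B_q$ = $q$-cycles, $q$-boundaries in the chain space of $K$). Lower corners of a simplex $\sigma$ are the minimal elements of $\{x:\sigma\in F(x)\}$; $F$ is non-degenerate if any two distinct lower corners differ in both coordinates. Notation: $xy:=ZB_qF[x,y]$ for $x\le y$; $wxyz:=xz-xy-wz+wy$ for $w\le x\le y\le z$. *)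

From HB Require Import structures.
From mathcomp Require Import all_boot all_order all_algebra.
Set Implicit Arguments. Unset Strict Implicit. Unset Printing Implicit Defensive.
Import GRing.Theory.
Local Open Scope ring_scope.

(* Vertices of K are 'I_N; a simplex is a (nonempty) finite set of vertices,
   a simplicial complex is a set of simplices. *)

Definition is_complex (N : nat) (K : {set {set 'I_N}}) : bool :=
  [forall s in K, (s != set0) &&
     [forall t : {set 'I_N}, ((t \subset s) && (t != set0)) ==> (t \in K)]].

(* Chain space of all simplices (with coefficients in the field R);
   the q-chains of a subcomplex are spanned by the basis vectors of its
   simplices of cardinality q+1 (dimension q). *)
Definition chain (R : fieldType) (N : nat) := {ffun {set 'I_N} -> R^o}.

(* incidence coefficient [s : t] of the (oriented, vertices ordered by their
   index) simplex s on its codimension-one face t; non-augmented (no empty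
   simplex). *)
Definition incid (R : fieldType) (N : nat) (t s : {set 'I_N}) : R :=
  if t == set0 then 0 else
  \sum_(v in s) (if t == s :\ v
                 then (-1) ^+ #|[set u in s | (val u < val v)%N]| else 0).

Definition bdsimp (R : fieldType) (N : nat) (s : {set 'I_N}) : chain R N :=
  [ffun t => incid R t s].

Definition bd (R : fieldType) (N : nat) (c : chain R N) : chain R N :=
  \sum_(s : {set 'I_N}) c s *: bdsimp R s.

Definition basis_chain (R : fieldType) (N : nat) (s : {set 'I_N}) : chain R N :=
  [ffun t => (t == s)%:R].

Definition Cq (R : fieldType) (N : nat) (A : {set {set 'I_N}}) (q : nat)
  : {vspace chain R N} :=
  <<[seq basis_chain R s | s <- enum [set s in A | #|s| == q.+1]]>>%VS.

Definition Zq (R : fieldType) (N : nat) (A : {set {set 'I_N}}) (q : nat)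
  : {vspace chain R N} :=
  (Cq R A q :&: lker (linfun (@bd R N)))%VS.

Definition Bq (R : fieldType) (N : nat) (A : {set {set 'I_N}}) (q : nat)
  : {vspace chain R N} :=
  (linfun (@bd R N) @: Cq R A q.+1)%VS.

Definition in_grid (n : nat) (x : nat * nat) : bool := (x.1 <= n)%N && (x.2 <= n)%N.
Definition leg (x y : nat * nat) : bool := (x.1 <= y.1)%N && (x.2 <= y.2)%N.

Definition is_2filtration (N n : nat) (K : {set {set 'I_N}})
  (F : nat * nat -> {set {set 'I_N}}) : Prop :=
  [/\ is_complex K,
      (forall x, in_grid n x -> is_complex (F x) /\ F x \subset K),
      (forall x y, in_grid n x -> in_grid n y -> leg x y -> F x \subset F y),
      F (0%N, 0%N) = set0 &
      F (n, n) = K].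

Definition lower_corner (N n : nat) (F : nat * nat -> {set {set 'I_N}})
  (s : {set 'I_N}) (x : nat * nat) : Prop :=
  [/\ in_grid n x, s \in F x &
      forall y, in_grid n y -> leg y x -> s \in F y -> y = x].

Definition nondegenerate_filt (N n : nat) (F : nat * nat -> {set {set 'I_N}}) : Prop :=
  forall s x y, lower_corner n F s x -> lower_corner n F s y -> x <> y ->
    x.1 <> y.1 /\ x.2 <> y.2.

Definition ZB (R : fieldType) (N n : nat) (F : nat * nat -> {set {set 'I_N}})
  (q : nat) (x y : nat * nat) : nat :=
  if y == (n, n) then \dim (Zq R (F x) q)
  else \dim (Zq R (F x) q :&: Bq R (F y) q)%VS.

(* wxyz := xz - xy - wz + wy *)
Definition rk4 (R : fieldType) (N n : nat) (F : nat * nat -> {set {set 'I_N}})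
  (q : nat) (w x y z : nat * nat) : int :=
  (ZB R n F q x z)%:Z - (ZB R n F q x y)%:Z - (ZB R n F q w z)%:Z
  + (ZB R n F q w y)%:Z.

(* The invariants [wxyz] are nonnegative: for nested subspaces U1 <= U2 and
   V1 <= V2, the dimension of the intersection is submodular,
   dim (U2 :&: V1) + dim (U1 :&: V2) <= dim (U2 :&: V2) + dim (U1 :&: V1).
   They are also additive when one of the two intervals is split at an
   intermediate grade.  Splitting both intervals of [adeh] at [x] and [y]
   writes [adeh = 1] as a sum A + B + C + D of nonnegative integers, with
   [axeh = A + B], [adey = A + C] and [axey = A]; since exactly one summand is
   1, (A + B) (A + C) = A. *)

From HB Require Import structures.
From mathcomp Require Import all_boot all_order all_algebra.
From mathcomp Require Import zify ring.
Set Implicit Arguments.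
Unset Strict Implicit.
Unset Printing Implicit Defensive.
Import GRing.Theory.
Local Open Scope ring_scope.

Lemma dimv_cap_submod (K : fieldType) (vT : vectType K) (U1 U2 V1 V2 : {vspace vT}) :
  (U1 <= U2)%VS -> (V1 <= V2)%VS ->
  (\dim (U2 :&: V1) + \dim (U1 :&: V2) <= \dim (U2 :&: V2) + \dim (U1 :&: V1))%N.
Proof.
move=> sU12 sV12; rewrite -dimv_sum_cap leq_add //; apply: dimvS.
  by rewrite subv_add !capvS.
by rewrite subv_cap (subv_trans (capvSr _ _) (capvSl _ _))
                    (subv_trans (capvSl _ _) (capvSr _ _)).
Qed.

Section ChainSubspaces.
Variables (R : fieldType) (N : nat).
Implicit Types A B : {set {set 'I_N}}.

Lemma CqS A B q : A \subset B -> (Cq R A q <= Cq R B q)%VS.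
Proof.
move=> sAB; apply: sub_span => v /mapP [s]; rewrite mem_enum inE => /andP [sA sq] ->.
by apply: map_f; rewrite mem_enum inE sq (subsetP sAB).
Qed.

Lemma ZqS A B q : A \subset B -> (Zq R A q <= Zq R B q)%VS.
Proof. by move=> sAB; rewrite capvS // CqS. Qed.

Lemma BqS A B q : A \subset B -> (Bq R A q <= Bq R B q)%VS.
Proof. by move=> sAB; rewrite limgS // CqS. Qed.

End ChainSubspaces.

Section RankInvariants.
Variables (R : fieldType) (N n : nat) (K : {set {set 'I_N}}).
Variables (F : nat * nat -> {set {set 'I_N}}) (q : nat).
Hypothesis filtF : is_2filtration n K F.

(* At the top grade, [ZB] uses all cycles: read it as intersecting with the
   whole chain space there. *)
Definition Bgrade (z : nat * nat) : {vspace chain R N} :=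
  if z == (n, n) then fullv else Bq R (F z) q.

Lemma ZB_dimE x z : ZB R n F q x z = \dim (Zq R (F x) q :&: Bgrade z).
Proof. by rewrite /ZB /Bgrade; case: ifP => // _; rewrite capvf. Qed.

Lemma ZqF_mono x y : in_grid n x -> in_grid n y -> leg x y ->
  (Zq R (F x) q <= Zq R (F y) q)%VS.
Proof. by case: filtF => _ _ monoF _ _ gx gy lxy; rewrite ZqS // monoF. Qed.

Lemma Bgrade_mono y z : in_grid n y -> in_grid n z -> leg y z ->
  (Bgrade y <= Bgrade z)%VS.
Proof.
case: filtF => _ _ monoF _ _ gy gz lyz; rewrite /Bgrade.
have [_|ztop] := eqVneq z (n, n); first by case: ifP; rewrite subvf.
have -> : (y == (n, n)) = false.
  apply/eqP => ytop; move: ztop gz lyz; rewrite ytop /in_grid /leg /=.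
  by case: z => z1 z2 /= /eqP ztop /andP [? ?] /andP [? ?]; apply: ztop; congr pair; lia.
by rewrite BqS // monoF.
Qed.

Lemma rk4_ge0 w x y z :
  in_grid n w -> in_grid n x -> in_grid n y -> in_grid n z ->
  leg w x -> leg y z -> 0 <= rk4 R n F q w x y z.
Proof.
move=> gw gx gy gz lwx lyz; rewrite /rk4 !ZB_dimE.
have := dimv_cap_submod (ZqF_mono gw gx lwx) (Bgrade_mono gy gz lyz).
by move: (\dim _) (\dim _) (\dim _) (\dim _) => ? ? ? ?; lia.
Qed.

Lemma rk4_split1 w m x y z :
  rk4 R n F q w x y z = rk4 R n F q w m y z + rk4 R n F q m x y z.
Proof. by rewrite /rk4; move: (ZB R n F q) => P; ring. Qed.

Lemma rk4_split2 w x y m z :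
  rk4 R n F q w x y z = rk4 R n F q w x y m + rk4 R n F q w x m z.
Proof. by rewrite /rk4; move: (ZB R n F q) => P; ring. Qed.

Lemma nonneg_sum4_eq1_mul (A B C D : int) :
  0 <= A -> 0 <= B -> 0 <= C -> 0 <= D -> A + B + C + D = 1 ->
  (A + B) * (A + C) = A.
Proof. by move=> *; nia. Qed.

Lemma rk4_eq1_mul a x d e y h :
  in_grid n a -> in_grid n x -> in_grid n d ->
  in_grid n e -> in_grid n y -> in_grid n h ->
  leg a x -> leg x d -> leg e y -> leg y h ->
  rk4 R n F q a d e h = 1 ->
  rk4 R n F q a x e h * rk4 R n F q a d e y = rk4 R n F q a x e y.
Proof.
move=> ga gx gd ge gy gh lax lxd ley lyh adeh1.
rewrite (rk4_split2 a x e y h) (rk4_split1 a x d e y).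
apply: (@nonneg_sum4_eq1_mul _ _ _ (rk4 R n F q x d y h)); try exact: rk4_ge0.
by rewrite -adeh1 (rk4_split1 a x d e h) !(rk4_split2 _ _ e y h) !addrA.
Qed.

End RankInvariants.

Theorem mainTheorem4 (R : fieldType) (N n : nat) (K : {set {set 'I_N}})
  (F : nat * nat -> {set {set 'I_N}}) (q : nat) (d h : nat * nat) :
  is_2filtration n K F -> nondegenerate_filt n F ->
  (1 <= d.1)%N -> (1 <= d.2)%N ->
  (d.1 <= h.1 - 1)%N -> (d.2 <= h.2 - 1)%N ->
  (h.1 <= n)%N -> (h.2 <= n)%N ->
  let a := (d.1 - 1, d.2 - 1)%N in
  let b := (d.1 - 1, d.2)%N in
  let c := (d.1, d.2 - 1)%N in
  let e := (h.1 - 1, h.2 - 1)%N in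
  let f := (h.1 - 1, h.2)%N in
  let g := (h.1, h.2 - 1)%N in
  rk4 R n F q a d e h = 1 ->
  [/\ rk4 R n F q a b e h * rk4 R n F q a d e f = rk4 R n F q a b e f,
      rk4 R n F q a c e h * rk4 R n F q a d e f = rk4 R n F q a c e f,
      rk4 R n F q a b e h * rk4 R n F q a d e g = rk4 R n F q a b e g &
      rk4 R n F q a c e h * rk4 R n F q a d e g = rk4 R n F q a c e g].
Proof.
case: d h => [d1 d2] [h1 h2] /= filtF _ *.
by split; apply: (rk4_eq1_mul filtF); rewrite // /in_grid /leg /=; lia.
Qed.
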